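(* Let $H\in\mathbb{R}^{\ell\times\ell}$ be symmetric, $0\neq g_0\in\mathbb{R}^{\ell}$ and $\gamma>0$. Consider the quadratic eigenvalue problem (QEP) $(H-\lambda I)^2w=\gamma^{-2}g_0g_0^{\top}w$, where an eigenvalue is a $\lambda\in\mathbb{C}$ for which there is a nonzero $w\in\mathbb{C}^{\ell}$ satisfying this equation. Then the leftmost eigenvalue of this QEP (the one with the smallest real part) is real. As a consequence, the optimal value $\lambda_*$ of the problem pQEPmin — minimize $\lambda$ over $\lambda\in\mathbb{R}$ and $0\ne w\in\mathbb{R}^\ell$ with $(H-\lambda I)^2w=\gamma^{-2}g_0g_0^{\top}w$ — is the leftmost eigenvalue of this QEP. *)

(* real closed field R (covers the reals), complex numbers R[i]. *)
From HB Require Import structures.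
From mathcomp Require Import all_boot all_order all_algebra.
From mathcomp Require Export complex.
Set Implicit Arguments. Unset Strict Implicit. Unset Printing Implicit Defensive.
Import Order.TTheory GRing.Theory Num.Theory.
Local Open Scope ring_scope.

Definition toCmx (R : rcfType) (m n : nat) (A : 'M[R]_(m, n)) : 'M[R[i]]_(m, n) :=
  map_mx (fun x : R => Complex x 0) A.

Definition qep_eigenvalue (R : rcfType) (l : nat) (H : 'M[R]_l) (g0 : 'cV[R]_l)
    (gamma : R) (lam : R[i]) : Prop :=
  exists w : 'cV[R[i]]_l, w != 0 /\
    (toCmx H - lam%:M) *m (toCmx H - lam%:M) *m w
      = (Complex (gamma ^-2) 0) *: (toCmx g0 *m (toCmx g0)^T *m w).

Definition pqep_feasible (R : rcfType) (l : nat) (H : 'M[R]_l) (g0 : 'cV[R]_l)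
    (gamma : R) (lam : R) : Prop :=
  exists w : 'cV[R]_l, w != 0 /\
    (H - lam%:M) *m (H - lam%:M) *m w = (gamma ^-2) *: (g0 *m g0^T *m w).

From HB Require Import structures.
From mathcomp Require Import all_boot all_order all_algebra.
From mathcomp Require Import complex spectral sesquilinear.
From mathcomp Require Import ring lra.
From Stdlib Require Import Classical_Prop.
Set Implicit Arguments. Unset Strict Implicit. Unset Printing Implicit Defensive.
Import Order.TTheory GRing.Theory Num.Theory Num.Def ComplexField.Normc.
Local Open Scope ring_scope.

(* Diagonalise toCmx H = U^* diag(d) U and put h = U g0, c = gamma^-2.  In the
   coordinates y = U w the QEP reads (d_i - mu)^2 y_i = c h_i <h, y>, and pairing
   it with y gives  sum_i (d_i - mu)^2 |y_i|^2 = c |<h, y>|^2.  Call s a lower shift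
   when s <= d_i for all i and (D - s)^2 - c |h| |h|^T is positive semidefinite;
   then c |<h, y>|^2 <= sum_i (d_i - s)^2 |y_i|^2, and comparing real and imaginary
   parts forces Re mu >= s, with equality only for mu = s.  A lower shift which is
   itself an eigenvalue exists: either the secular equation
   c sum_i |h_i|^2 / (d_i - t)^2 = 1 has a root s < min d (intermediate value
   theorem for its numerator; Cauchy-Schwarz gives semidefiniteness), or the
   secular function stays below 1 left of min d, and then s = min d is a lower
   shift by continuity, with a vanishing weight h_k at d_k = s.  A real eigenvalue
   has a real eigenvector since the real matrix (H - s)^2 - c g0 g0^T is singular. *)

Lemma sqr_sum_mul_le (R : realFieldType) (I : finType) (u v : I -> R) :
  (\sum_i u i * v i) ^+ 2 <= (\sum_i u i ^+ 2) * (\sum_i v i ^+ 2).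
Proof.
rewrite expr2 !big_distrlr -subr_ge0 -sumrB /=.
under eq_bigr do rewrite -sumrB.
set D := (X in 0 <= X).
have lagrange : D *+ 2 = \sum_i \sum_j (u i * v j - u j * v i) ^+ 2.
  rewrite mulr2n [X in _ + X = _]exchange_big -big_split /=.
  by apply: eq_bigr => i _; rewrite -big_split; apply: eq_bigr => j _ /=; ring.
have : 0 <= D *+ 2 by rewrite lagrange; do 2!apply: sumr_ge0 => ? _; exact: sqr_ge0.
by rewrite pmulrn_lge0.
Qed.

Lemma le_of_quadratic_gap (R : realFieldType) (x y p q : R) : 0 <= p -> 0 <= q ->
  (forall e, 0 < e -> x <= y + e * (p + e * q)) -> x <= y.
Proof.
move=> p_ge0 q_ge0 gap; apply/ler_addgt0Pr => e e_gt0.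
set e' := e / (p + q + e + 1).
have e'_gt0 : 0 < e' by apply: divr_gt0; lra.
have e'_le1 : e' <= 1 by rewrite ler_pdivrMr; lra.
have e'_small : e' * (p + q) <= e by rewrite mulrAC ler_pdivrMr; [nra | lra].
apply: le_trans (gap _ e'_gt0) _; rewrite lerD2l.
by apply: le_trans e'_small; rewrite ler_wpM2l ?lerD2l ?ler_piMl //; lra.
Qed.

Section SecularEquation.
Variables (R : rcfType) (l : nat) (d a : 'I_l -> R) (c : R).
Hypothesis c_gt0 : 0 < c.

Definition lower_shift (s : R) :=
  (forall i, s <= d i) /\
  forall b : 'I_l -> R, c * (\sum_i a i * b i) ^+ 2 <= \sum_i (d i - s) ^+ 2 * b i ^+ 2.

Definition secular (t : R) := c * \sum_i a i ^+ 2 / (d i - t) ^+ 2.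

Definition secular_poly : {poly R} :=
  \prod_i ((d i)%:P - 'X) ^+ 2 -
  \sum_i (c * a i ^+ 2) *: \prod_(j | j != i) ((d j)%:P - 'X) ^+ 2.

Lemma horner_secular_poly t : (forall i, t < d i) ->
  secular_poly.[t] = (\prod_i (d i - t) ^+ 2) * (1 - secular t).
Proof.
move=> t_lt; have d_neq i : d i - t != 0 by rewrite subr_eq0 gt_eqF.
rewrite hornerD hornerN horner_prod horner_sum mulrBr mulr1 /secular.
congr (_ - _); first by apply: eq_bigr => i _; rewrite horner_exp !hornerE.
rewrite mulrA mulr_sumr; apply: eq_bigr => i _.
rewrite hornerZ horner_prod [in RHS](bigD1 i) //=.
under eq_bigr do rewrite horner_exp !hornerE.
by field.
Qed.

Lemma prod_sqr_gt0 t : (forall i, t < d i) -> 0 < \prod_i (d i - t) ^+ 2.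
Proof. by move=> t_lt; apply: prodr_gt0 => i _; rewrite exprn_gt0 // subr_gt0. Qed.

Lemma weight_ge0 : 0 <= c * \sum_i a i ^+ 2.
Proof. by apply: mulr_ge0; [exact: ltW | apply: sumr_ge0 => i _; exact: sqr_ge0]. Qed.

Lemma secular_lt1 t : (forall i, t + (1 + c * \sum_i a i ^+ 2) <= d i) -> secular t < 1.
Proof.
set K := 1 + _ => t_le.
have sa_ge0 := weight_ge0.
have K_gt0 : 0 < K by rewrite /K; lra.
apply: (@le_lt_trans _ _ (c * (\sum_i a i ^+ 2) / K)); last by rewrite ltr_pdivrMr /K; lra.
rewrite /secular -mulrA ler_pM2l // mulr_suml; apply: ler_sum => i _.
apply: ler_wpM2l; first exact: sqr_ge0.
have K_le : K <= d i - t by have := t_le i; lra.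
rewrite lef_pV2 ?posrE ?exprn_gt0 //; first by rewrite /K in K_le *; nra.
by lra.
Qed.

Lemma lower_shift_secular t : (forall i, t < d i) -> secular t <= 1 -> lower_shift t.
Proof.
move=> t_lt sec_le1; split=> [i|b]; first exact/ltW.
have d_neq i : d i - t != 0 by rewrite subr_eq0 gt_eqF.
have := sqr_sum_mul_le (fun i => a i / (d i - t)) (fun i => (d i - t) * b i).
under eq_bigr do rewrite mulrA divfK //.
under [X in _ <= X * _]eq_bigr do rewrite expr_div_n.
under [X in _ <= _ * X]eq_bigr do rewrite exprMn.
move=> /(ler_wpM2l (ltW c_gt0)) /le_trans; apply.
rewrite mulrA -[leRHS]mul1r ler_wpM2r //.
by apply: sumr_ge0 => i _; rewrite mulr_ge0 ?sqr_ge0.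
Qed.

Lemma lower_shift_left_closed s : (forall i, s <= d i) ->
  (forall t, t < s -> lower_shift t) -> lower_shift s.
Proof.
move=> s_le shift_lt; split=> // b.
apply: (@le_of_quadratic_gap _ _ _ (2 * \sum_i (d i - s) * b i ^+ 2) (\sum_i b i ^+ 2)).
- rewrite mulr_ge0 // sumr_ge0 // => i _.
  by rewrite mulr_ge0 ?sqr_ge0 // subr_ge0.
- by rewrite sumr_ge0 // => i _; exact: sqr_ge0.
move=> e e_gt0; have [_ ] : lower_shift (s - e) by apply: shift_lt; lra.
move=> /(_ b) /le_trans; apply; rewrite le_eqVlt; apply/orP; left; apply/eqP.
rewrite mulr_sumr mulr_sumr -big_split mulr_sumr -big_split /=.
by apply: eq_bigr => i _; ring.
Qed.

Lemma exists_lower_shift (k : 'I_l) : (forall i, d k <= d i) ->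
  exists2 s, lower_shift s &
    ((forall i, s < d i) /\ secular s = 1) \/ (exists j, d j = s /\ a j = 0).
Proof.
move=> k_min.
have [[t0 t0_lt P_t0]|P_pos] :=
  classic (exists2 t, t < d k & secular_poly.[t] <= 0).
  have t0_lt' i : t0 < d i by apply: lt_le_trans t0_lt (k_min i).
  set T := t0 - (1 + c * \sum_i a i ^+ 2).
  have sa_ge0 := weight_ge0.
  have T_le i : T + (1 + c * \sum_i a i ^+ 2) <= d i by rewrite /T subrK ltW.
  have T_lt i : T < d i by have := T_le i; lra.
  have P_T : 0 < secular_poly.[T].
    by rewrite horner_secular_poly // mulr_gt0 ?prod_sqr_gt0 // subr_gt0 secular_lt1.
  have [s /andP[_ s_t0]] : exists2 s, T <= s <= t0 & root (- secular_poly) s.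
    apply: (@poly_ivt _ (- secular_poly)); first by rewrite /T; lra.
    by rewrite !hornerN oppr_le0 oppr_ge0 ltW.
  have s_lt i : s < d i by apply: le_lt_trans s_t0 (t0_lt' i).
  rewrite /root hornerN oppr_eq0 horner_secular_poly //.
  rewrite mulf_eq0 gt_eqF ?prod_sqr_gt0 //= subr_eq0.
  move=> /eqP sec_s; exists s; last by left; split.
  by apply: lower_shift_secular; rewrite // -sec_s.
have sec_lt1 t : t < d k -> secular t < 1.
  move=> t_lt; have t_lt' i : t < d i by apply: lt_le_trans t_lt (k_min i).
  have : 0 < secular_poly.[t] by rewrite ltNge; apply/negP => P_le; apply: P_pos; exists t.
  by rewrite horner_secular_poly // pmulr_rgt0 ?prod_sqr_gt0 // subr_gt0.
have shift_dk : lower_shift (d k).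
  apply: lower_shift_left_closed => // t t_lt.
  apply: lower_shift_secular; last exact/ltW/sec_lt1.
  by move=> i; apply: lt_le_trans t_lt (k_min i).
exists (d k) => //; right; exists k; split=> //; apply/eqP.
have := shift_dk.2 (fun i => (i == k)%:R).
rewrite (bigD1 k) //= [X in _ <= X](bigD1 k) //= !big1 => [| i /negbTE -> | i /negbTE ->].
- rewrite eqxx subrr !mulr1 addr0 expr0n /= mul0r add0r.
  by rewrite pmulr_rle0 // => ak_le0; rewrite -sqrf_eq0 eq_le ak_le0 sqr_ge0.
- by rewrite expr0n /= mulr0.
- by rewrite mulr0.
Qed.

End SecularEquation.

(* Real and imaginary parts of sum_i (u_i - x - i b)^2 N_i = r, for u_i = d_i - s,
   x = Re mu - s, b = Im mu and N_i = |y_i|^2. *)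
Lemma re_im_moment_bound (R : realFieldType) (I : finType) (u N : I -> R) (x b r : R) :
  (forall i, 0 <= u i) -> (forall i, 0 <= N i) -> (exists i, 0 < N i) ->
  0 <= r -> r <= \sum_i u i ^+ 2 * N i ->
  \sum_i ((u i - x) ^+ 2 - b ^+ 2) * N i = r ->
  b * \sum_i (u i - x) * N i = 0 ->
  0 <= x /\ (x = 0 -> b = 0).
Proof.
move=> u_ge0 N_ge0 [i0 Ni0_gt0] r_ge0 r_le re_eq im_eq.
set n := \sum_i N i; set q := \sum_i u i * N i; set p := \sum_i u i ^+ 2 * N i.
rewrite -/p in r_le.
have n_gt0 : 0 < n.
  rewrite /n (bigD1 i0) //= ltr_pwDl //.
  by apply: sumr_ge0 => i _.
have q_ge0 : 0 <= q by apply: sumr_ge0 => i _; exact: mulr_ge0.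
have {}re_eq : p - 2 * x * q + x ^+ 2 * n - b ^+ 2 * n = r.
  rewrite -re_eq /p /q /n !mulr_sumr -sumrB -big_split -sumrB /=.
  by apply: eq_bigr => i _; ring.
have {}im_eq : b * (q - x * n) = 0.
  rewrite -[RHS]im_eq /q /n [x * _]mulr_sumr -sumrB.
  by congr (_ * _); apply: eq_bigr => i _; ring.
have p0_of_q0 : q = 0 -> p = 0.
  move=> /eqP; rewrite psumr_eq0 => [/allP uN0|i _]; last exact: mulr_ge0.
  rewrite /p big1 // => i _; have /implyP/(_ isT)/eqP := uN0 i (mem_index_enum i).
  by rewrite expr2 -mulrA => ->; rewrite mulr0.
have [b0|b_neq0] := eqVneq b 0.
  split=> [|_ //]; rewrite leNgt; apply/negP => x_lt0.
  have : 0 < x ^+ 2 * n by rewrite mulr_gt0 // expr2 nmulr_rgt0.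
  by move: re_eq; rewrite b0 expr0n /= mul0r subr0; nra.
move: im_eq => /eqP; rewrite mulf_eq0 (negbTE b_neq0) subr_eq0 => /eqP q_eq.
have x_ge0 : 0 <= x by rewrite -(pmulr_lge0 _ n_gt0) -q_eq.
split=> // x0; move: re_eq; rewrite p0_of_q0; last by rewrite q_eq x0 mul0r.
have : 0 < b ^+ 2 * n by rewrite mulr_gt0 // exprn_even_gt0.
by rewrite x0; nra.
Qed.

Local Open Scope complex_scope.

Lemma big_Complex (R : rcfType) (I : finType) (x y : I -> R) :
  \sum_i Complex (x i) (y i) = Complex (\sum_i x i) (\sum_i y i).
Proof. by elim/big_rec3: _ => // i z u v _ ->. Qed.

Lemma normcE (R : rcfType) (z : R[i]) : `|z| = (normc z)%:C.
Proof. by case: z => x y; rewrite normc_def. Qed.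

Lemma conjC_mul_normc (R : rcfType) (z : R[i]) : conjC z * z = (normc z ^+ 2)%:C.
Proof. by rewrite -normCKC normcE rmorphXn. Qed.

Lemma normc_sum_le (R : rcfType) (I : finType) (F : I -> R[i]) :
  normc (\sum_i F i) <= \sum_i normc (F i).
Proof.
elim/big_ind2: _ => [|x1 x2 y1 y2 le1 le2|//]; first by rewrite normc0.
by apply: le_trans (le_normcD _ _) _; exact: lerD.
Qed.

Lemma normc_ge0 (R : rcfType) (z : R[i]) : 0 <= normc z.
Proof. by case: z => x y; exact: sqrtr_ge0. Qed.

Lemma normc_conjC (R : rcfType) (z : R[i]) : normc (conjC z) = normc z.
Proof. by case: z => x y /=; rewrite sqrrN. Qed.

Section CoordinateQEP.
Variables (R : rcfType) (l : nat) (d : 'I_l -> R) (h : 'I_l -> R[i]) (c : R).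
Hypothesis c_gt0 : 0 < c.

Definition coord_qep (mu : R[i]) (y : 'I_l -> R[i]) :=
  forall i, ((d i)%:C - mu) ^+ 2 * y i = c%:C * h i * \sum_j conjC (h j) * y j.

Lemma coord_qep_energy mu y : coord_qep mu y ->
  \sum_i ((d i)%:C - mu) ^+ 2 * (normc (y i) ^+ 2)%:C
    = (c * normc (\sum_j conjC (h j) * y j) ^+ 2)%:C.
Proof.
move=> qep; set k := \sum_j conjC (h j) * y j.
transitivity (\sum_i conjC (y i) * (((d i)%:C - mu) ^+ 2 * y i)).
  by apply: eq_bigr => i _; rewrite -conjC_mul_normc; ring.
have conj_k : conjC k = \sum_i conjC (y i) * h i.
  by rewrite rmorph_sum; apply: eq_bigr => i _; rewrite rmorphM /= conjCK mulrC.
under eq_bigr do rewrite qep.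
rewrite rmorphM /= -conjC_mul_normc conj_k mulr_suml mulr_sumr.
by apply: eq_bigr => i _; rewrite -/k; ring.
Qed.

Lemma coord_qep_re_ge s mu y : lower_shift d (fun i => normc (h i)) c s ->
  (exists i, y i != 0) -> coord_qep mu y ->
  s <= complex.Re mu /\ (complex.Re mu = s -> mu = s%:C).
Proof.
move=> [s_le shift_bound] [i0 yi0] /coord_qep_energy.
set N := fun i => normc (y i) ^+ 2.
case: mu => a b /=.
have termE i : ((d i)%:C - Complex a b) ^+ 2 * (N i)%:C =
    Complex (((d i - s - (a - s)) ^+ 2 - b ^+ 2) * N i)
            (- 2 * (b * ((d i - s - (a - s)) * N i))).
  by rewrite expr2 /=; congr Complex; ring.
under eq_bigr do rewrite termE.
rewrite big_Complex => -[re_eq im_eq].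
have [||||||x_ge0 x0_b0] :=
  re_im_moment_bound (u := fun i => d i - s) (N := N) _ _ _ _ _ re_eq.
- by move=> i; rewrite subr_ge0.
- by move=> i; exact: sqr_ge0.
- exists i0; rewrite /N exprn_gt0 // lt0r normc_ge0 andbT.
  by apply: contra yi0 => /eqP /eq0_normc ->.
- by apply: mulr_ge0; [exact: ltW | exact: sqr_ge0].
- apply: le_trans (shift_bound (fun i => normc (y i))).
  have sum_ge0 : 0 <= \sum_i normc (h i) * normc (y i).
    by apply: sumr_ge0 => i _; rewrite mulr_ge0 ?normc_ge0.
  rewrite ler_pM2l // ler_sqr ?nnegrE ?normc_ge0 //.
  apply: le_trans (normc_sum_le _) _; apply: ler_sum => i _.
  by rewrite normcM normc_conjC.
- apply/eqP; move: im_eq; rewrite -mulr_sumr -mulr_sumr.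
  by move=> /eqP; rewrite mulf_eq0 oppr_eq0 pnatr_eq0.
split; first by rewrite -subr_ge0.
by move=> a_eq; rewrite a_eq x0_b0 // a_eq subrr.
Qed.

Lemma coord_qep_secular_root s : (forall i, s < d i) ->
  secular d (fun i => normc (h i)) c s = 1 ->
  coord_qep s%:C (fun i => h i / ((d i - s) ^+ 2)%:C).
Proof.
move=> s_lt sec1 i.
have D_neq0 j : ((d j - s) ^+ 2)%:C != 0 :> R[i].
  by rewrite fmorph_eq0 expf_neq0 // subr_eq0 gt_eqF.
have dotE : \sum_j conjC (h j) * (h j / ((d j - s) ^+ 2)%:C)
    = (\sum_j normc (h j) ^+ 2 / (d j - s) ^+ 2)%:C.
  by rewrite rmorph_sum; apply: eq_bigr => j _; rewrite mulrA conjC_mul_normc fmorph_div.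
rewrite dotE [RHS]mulrAC -(rmorphM (real_complex R)) [c * _]sec1 rmorph1 mul1r.
by rewrite -rmorphB -rmorphXn mulrC divfK.
Qed.

Lemma coord_qep_basis s j : d j = s -> h j = 0 -> coord_qep s%:C (fun i => (i == j)%:R).
Proof.
move=> dj_eq hj0 i; rewrite (bigD1 j) //= big1 => [|k /negbTE ->]; last by rewrite mulr0.
rewrite eqxx mulr1 hj0 rmorph0 addr0 mulr0.
by case: eqP => [->|_]; rewrite ?dj_eq ?subrr ?expr0n ?mul0r ?mulr0.
Qed.

Lemma exists_lower_shift_eigen (k : 'I_l) : (forall i, d k <= d i) ->
  exists2 s, lower_shift d (fun i => normc (h i)) c s &
    exists2 y, (exists i, y i != 0) & coord_qep s%:C y.
Proof.
move=> k_min.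
have [s shift [[s_lt sec1] | [j [dj_eq hj0]]]] :=
  exists_lower_shift (fun i => normc (h i)) c_gt0 k_min.
  exists s => //; exists (fun i => h i / ((d i - s) ^+ 2)%:C);
    last exact: coord_qep_secular_root.
  have [i hi0 | h0] := pickP (fun i => h i != 0).
    by exists i; rewrite mulf_neq0 // invr_eq0 fmorph_eq0 expf_neq0 // subr_eq0 gt_eqF.
  move: sec1; rewrite /secular big1 ?mulr0 => [/eqP|i _]; first by rewrite eq_sym oner_eq0.
  by move/negbFE/eqP: (h0 i) => ->; rewrite normc0 expr0n /= mul0r.
exists s => //; exists (fun i => (i == j)%:R); last exact: coord_qep_basis (eq0_normc hj0).
by exists j; rewrite eqxx oner_neq0.
Qed.

End CoordinateQEP.

Local Open Scope sesquilinear_scope.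

Lemma unitarymx_tV (C : numClosedFieldType) n (P : 'M[C]_n) :
  P \is unitarymx -> P^t* *m P = 1%:M.
Proof. by rewrite -trmxC_unitary => /unitarymxP; rewrite trmxCK. Qed.

Section SpectralCoordinates.
Variables (R : rcfType) (l : nat) (A P : 'M[R[i]]_l) (u : 'cV[R[i]]_l) (d : 'I_l -> R) (c : R).
Hypothesis P_unitary : P \is unitarymx.
Hypothesis A_spectral : A = P^t* *m diag_mx (\row_i (d i)%:C) *m P.

Let PV : P *m P^t* = 1%:M := unitarymxP P_unitary.
Let VP : P^t* *m P = 1%:M := unitarymx_tV P_unitary.

Lemma shift_spectral (mu : R[i]) :
  A - mu%:M = P^t* *m diag_mx (\row_i ((d i)%:C - mu)) *m P.
Proof.
have -> : diag_mx (\row_i ((d i)%:C - mu)) = diag_mx (\row_i (d i)%:C) - mu%:M.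
  by apply/matrixP => i j; rewrite !mxE; case: eqP => _; rewrite ?mulr1n ?mulr0n ?subr0.
by rewrite mulmxBr mulmxBl -A_spectral mul_mx_scalar -scalemxAl VP scalemx1.
Qed.

Lemma qep_coordE (mu : R[i]) (w : 'cV[R[i]]_l) :
  (A - mu%:M) *m (A - mu%:M) *m w = c%:C *: (u *m u^t* *m w) <->
  coord_qep d (fun i => (P *m u) i 0) c mu (fun i => (P *m w) i 0).
Proof.
pose y := P *m w; pose hv := P *m u; pose Dmu := diag_mx (\row_i ((d i)%:C - mu)).
have P_inj (X Y : 'cV[R[i]]_l) : P^t* *m X = P^t* *m Y -> X = Y.
  by move=> /(congr1 (mulmx P)); rewrite !mulmxA PV !mul1mx.
have lhsE : (A - mu%:M) *m (A - mu%:M) *m w = P^t* *m (Dmu *m (Dmu *m y)).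
  by rewrite shift_spectral /y -!mulmxA (mulmxA P) PV mul1mx.
have rhsE : c%:C *: (u *m u^t* *m w) = P^t* *m (c%:C *: (hv *m (hv^t* *m y))).
  have u_eq : u = P^t* *m hv by rewrite /hv mulmxA VP mul1mx.
  rewrite -scalemxAr [in LHS]u_eq trmx_mul map_mxM /= trmxCK /y.
  by rewrite -!mulmxA.
have lhs_i i : (Dmu *m (Dmu *m y)) i 0 = ((d i)%:C - mu) ^+ 2 * y i 0.
  by rewrite !mul_diag_mx !mxE mulrA expr2.
have rhs_i i : (c%:C *: (hv *m (hv^t* *m y))) i 0 =
    c%:C * hv i 0 * \sum_j conjC (hv j 0) * y j 0.
  rewrite !mxE big_ord1 mulrA !mxE; congr (_ * _).
  by apply: eq_bigr => j _; rewrite !mxE.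
rewrite lhsE rhsE; split => [/P_inj /matrixP eq_y i | qep].
  by rewrite -lhs_i eq_y rhs_i.
by congr (_ *m _); apply/matrixP => i j; rewrite ord1 lhs_i rhs_i qep.
Qed.

End SpectralCoordinates.

Lemma cV_neq0P (F : zmodType) n (v : 'cV[F]_n) : v != 0 -> exists i, v i 0 != 0.
Proof.
move=> /eqP v_neq0; have [i vi0 | v0] := pickP (fun i => v i 0 != 0); first by exists i.
by case: v_neq0; apply/matrixP => i j; rewrite ord1 mxE; apply/eqP/negbFE/v0.
Qed.

Lemma kernel_det0 (F : fieldType) n (A : 'M[F]_n) :
  (exists2 v : 'cV_n, v != 0 & A *m v = 0) <-> \det A = 0.
Proof.
rewrite -det_tr; split => [[v v_neq0 Av0] | /eqP /det0P [v v_neq0 vA0]].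
  by apply/eqP/det0P; exists v^T; rewrite ?trmx_eq0 // -trmx_mul Av0 trmx0.
by exists v^T; rewrite ?trmx_eq0 // -[A]trmxK -trmx_mul vA0 trmx0.
Qed.

Section RealSymmetricQEP.
Variables (R : rcfType) (l : nat) (H : 'M[R]_l) (g0 : 'cV[R]_l) (gamma : R).

Lemma toCmxE m n (M : 'M[R]_(m, n)) : toCmx M = map_mx (real_complex R) M.
Proof. by []. Qed.

Definition qep_matrix (lam : R) : 'M[R]_l :=
  (H - lam%:M) *m (H - lam%:M) - gamma ^-2 *: (g0 *m g0^T).

Lemma pqep_feasible_det lam : pqep_feasible H g0 gamma lam <-> \det (qep_matrix lam) = 0.
Proof.
rewrite -kernel_det0 /qep_matrix.
split=> [[v [v_neq0 eq_v]] | [v v_neq0 eq_v]].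
  by exists v; rewrite // mulmxBl -scalemxAl eq_v subrr.
by exists v; split=> //; apply/eqP; rewrite -subr_eq0 scalemxAl -mulmxBl eq_v.
Qed.

Lemma qep_eigenvalue_det lam :
  qep_eigenvalue H g0 gamma lam%:C <-> \det (qep_matrix lam) = 0.
Proof.
have toC_qep : toCmx (qep_matrix lam) = (toCmx H - lam%:C%:M) *m (toCmx H - lam%:C%:M)
    - (gamma ^-2)%:C *: (toCmx g0 *m (toCmx g0)^T).
  by rewrite /qep_matrix !toCmxE map_mxB map_mxZ !map_mxM map_mxB map_scalar_mx map_trmx.
have -> : (\det (qep_matrix lam) = 0) <-> (\det (toCmx (qep_matrix lam)) = 0).
  by rewrite toCmxE det_map_mx; split=> [-> | /eqP]; rewrite ?rmorph0 // fmorph_eq0 => /eqP.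
rewrite -kernel_det0 toC_qep.
split=> [[w [w_neq0 eq_w]] | [w w_neq0 eq_w]].
  by exists w; rewrite // mulmxBl -scalemxAl eq_w subrr.
by exists w; split=> //; apply/eqP; rewrite -subr_eq0 scalemxAl -mulmxBl eq_w.
Qed.

Lemma qep_eigenvalue_real lam :
  qep_eigenvalue H g0 gamma lam%:C <-> pqep_feasible H g0 gamma lam.
Proof. by rewrite qep_eigenvalue_det pqep_feasible_det. Qed.

Hypothesis H_sym : H^T = H.

Definition spec_basis := spectralmx (toCmx H).
Definition spec_eig (i : 'I_l) : R := complex.Re (spectral_diag (toCmx H) 0 i).
Definition spec_weight (i : 'I_l) : R[i] := (spec_basis *m toCmx g0) i 0.

Lemma toCmx_trC m n (M : 'M[R]_(m, n)) : (toCmx M)^T = (toCmx M)^t*.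
Proof. by apply/matrixP => i j; rewrite !mxE; exact/esym/conjc_real. Qed.

Lemma toCmx_hermitian : toCmx H \is hermsymmx.
Proof.
apply/is_hermitianmxP; rewrite expr0 scale1r -toCmx_trC.
by rewrite /toCmx map_trmx H_sym.
Qed.

Lemma toCmx_spectral :
  toCmx H = spec_basis^t* *m diag_mx (\row_i (spec_eig i)%:C) *m spec_basis.
Proof.
have /mxOverP real_diag := hermitian_spectral_diag_real toCmx_hermitian.
have -> : \row_i (spec_eig i)%:C = spectral_diag (toCmx H).
  by apply/rowP => i; rewrite mxE RRe_real // real_diag.
rewrite /spec_basis -invmx_unitary ?spectral_unitarymx //.
exact/orthomx_spectralP/hermitian_normalmx/toCmx_hermitian.
Qed.

Lemma qep_eigenvalue_coord mu : qep_eigenvalue H g0 gamma mu <->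
  exists2 y, (exists i, y i != 0) & coord_qep spec_eig spec_weight (gamma ^-2) mu y.
Proof.
have P_unitary : spec_basis \is unitarymx := spectral_unitarymx _.
have coordE w := qep_coordE (toCmx g0) (gamma ^-2) P_unitary toCmx_spectral mu w.
rewrite /qep_eigenvalue toCmx_trC; split=> [[w [w_neq0 /coordE qep]] | [y y_neq0 qep]].
  exists (fun i => (spec_basis *m w) i 0) => //; apply: cV_neq0P.
  apply: contra w_neq0 => /eqP Pw0.
  by rewrite -[w]mul1mx -(unitarymx_tV P_unitary) -mulmxA Pw0 mulmx0.
pose w := spec_basis^t* *m \col_i y i.
have Pw i : (spec_basis *m w) i 0 = y i.
  by rewrite mulmxA (unitarymxP P_unitary) mul1mx mxE.
exists w; split.
  have [i yi0] := y_neq0.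
  by apply: contra yi0 => /eqP w0; rewrite -Pw w0 mulmx0 mxE.
by apply/coordE => i; rewrite Pw; under eq_bigr do rewrite Pw; exact: qep.
Qed.

End RealSymmetricQEP.

Local Close Scope sesquilinear_scope.
Local Close Scope complex_scope.

Theorem theorem2p7 (R : rcfType) (l : nat) (H : 'M[R]_l) (g0 : 'cV[R]_l) (gamma : R) :
  H^T = H -> g0 != 0 -> 0 < gamma ->
  exists lamS : R,
    (* lamS is a (real) eigenvalue of the QEP *)
    qep_eigenvalue H g0 gamma (Complex lamS 0) /\
    (* it is the leftmost one, and every eigenvalue with the smallest real part equals it *)
    (forall mu : R[i], qep_eigenvalue H g0 gamma mu ->
        lamS <= @complex.Re R mu /\ (@complex.Re R mu = lamS -> mu = Complex lamS 0)) /\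
    (* consequence: lamS is the optimal value of pQEPmin (attained) *)
    pqep_feasible H g0 gamma lamS /\
    (forall lam : R, pqep_feasible H g0 gamma lam -> lamS <= lam).
Proof.
move=> H_sym g0_neq0 gamma_gt0.
have c_gt0 : 0 < gamma ^-2 by rewrite invr_gt0 exprn_gt0.
have [i0 _] := cV_neq0P g0_neq0.
have [k _ k_min] := @arg_minP _ _ _ i0 xpredT (spec_eig H) isT.
have [s shift [y y_neq0 qep_s]] :=
  exists_lower_shift_eigen (spec_weight H g0) c_gt0 (fun i => k_min i isT).
have leftmost mu : qep_eigenvalue H g0 gamma mu ->
    s <= complex.Re mu /\ (complex.Re mu = s -> mu = Complex s 0).
  by case/(qep_eigenvalue_coord _ _ H_sym) => z z_neq0; exact: coord_qep_re_ge shift z_neq0.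
have eig_s : qep_eigenvalue H g0 gamma (Complex s 0).
  by apply/(qep_eigenvalue_coord _ _ H_sym); exists y.
exists s; split=> //; split=> //; split; first exact/qep_eigenvalue_real.
by move=> lam /qep_eigenvalue_real /leftmost [].
Qed.
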